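(* Let $t=(k_1,\dots,k_l)$ be a parameter tuple of length $l\in\mathbb{N}$, let $m\in\mathbb{N}_0$ and $s\in\mathbb{R}$ with $s>1$. Then $$\mathrm{vdW}_{m+l}(\underbrace{2,\dots,2}_{m},k_1,\dots,k_l)\le\max\big(s\cdot m+1,\ \mathrm{cr}_{\mathrm{ap}}(t,1-\tfrac1s)\big).$$
   Context: A parameter tuple is a non-decreasing tuple $(k_1,\dots,k_r)$ of integers $k_i\ge2$. An arithmetic progression of size $k$ in $\mathbb{N}$ is a $k$-element set $P\subset\mathbb{N}$ such that, in natural order, consecutive elements always have the same distance (for $k>1$: sets $\{a+id: i=0,\dots,k-1\}$ with $a,d\in\mathbb{N}$). For a parameter tuple $(k_1,\dots,k_r)$, the van der Waerden number $\mathrm{vdW}_r(k_1,\dots,k_r)$ is the smallest $n_0\in\mathbb{N}$ such that for every $n\ge n_0$ and every $f:\{1,\dots,n\}\to\{1,\dots,r\}$ there is $i$ such that $f^{-1}(i)$ contains an arithmetic progression of size $k_i$. Let $\mathrm{ap}(k,n)$ be the hypergraph with vertex set $\{1,\dots,n\}$ whose hyperedges are the arithmetic progressions of size $k$ in $\{1,\dots,n\}$. For $q>0$, $\mathrm{cr}_{\mathrm{ap}}(t,q)\in\mathbb{N}\cup\{+\infty\}$ is the infimum of all $n\in\mathbb{N}$ such that for all $n'\ge n$ and all pairwise disjoint $S_1,\dots,S_l\subseteq\{1,\dots,n'\}$ with $S_i$ containing no arithmetic progression of size $k_i$, we have $\frac{|S_1|+\dots+|S_l|}{n'}<q$ (infimum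 of the empty set is $+\infty$). *)

From HB Require Import structures.
From mathcomp Require Import all_boot all_order all_algebra.
From mathcomp Require Import boolp classical_sets reals constructive_ereal ereal.
Set Implicit Arguments. Unset Strict Implicit. Unset Printing Implicit Defensive.
Import Order.TTheory GRing.Theory Num.Theory.
Local Open Scope classical_set_scope.
Local Open Scope ring_scope.
Local Open Scope ereal_scope.

Definition param_tuple (t : seq nat) : Prop :=
  sorted leq t /\ all (fun k => 2 <= k)%N t.

Definition has_ap (k : nat) (S : nat -> Prop) : Prop :=
  exists a d : nat, (0 < a)%N /\ (0 < d)%N /\ forall i, (i < k)%N -> S (a + i * d)%N.

(* Element y : 'I_n represents the integer y+1 of {1,...,n}. *)
Definition set_of_ord (n : nat) (A : {set 'I_n}) : nat -> Prop :=
  fun x => exists y : 'I_n, y \in A /\ x = y.+1.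

Definition colour_class (n r : nat) (f : 'I_n -> 'I_r) (i : 'I_r) : nat -> Prop :=
  set_of_ord [set y | f y == i].

Definition vdW_prop (ks : seq nat) (n0 : nat) : Prop :=
  forall n : nat, (n0 <= n)%N ->
  forall f : 'I_n -> 'I_(size ks),
  exists i : 'I_(size ks), has_ap (nth 0%N ks i) (colour_class f i).

(* vdW_r(k_1,...,k_r): the smallest n0 in N with vdW_prop (inf of empty = +oo). *)
Definition vdW (R : realType) (ks : seq nat) : \bar R :=
  ereal_inf [set (n0%:R)%:E | n0 in [set n0 : nat | (0 < n0)%N /\ vdW_prop ks n0]].

Definition cr_prop (R : realType) (t : seq nat) (q : R) (n : nat) : Prop :=
  forall n' : nat, (n <= n')%N ->
  forall S : 'I_(size t) -> {set 'I_n'},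
    (forall i j : 'I_(size t), i != j -> (S i :&: S j == finset.set0)) ->
    (forall i : 'I_(size t), ~ has_ap (nth 0%N t i) (set_of_ord (S i))) ->
    (((\sum_(i : 'I_(size t)) #|S i|)%N)%:R / n'%:R < q)%R.

Definition cr_ap (R : realType) (t : seq nat) (q : R) : \bar R :=
  ereal_inf [set (n%:R)%:E | n in [set n : nat | (0 < n)%N /\ cr_prop t q n]].

(* Colour classes of the m colours with parameter 2 avoid an AP of size 2, so
   each has at most one element. If no colour class contains its AP, the classes
   of the remaining l colours are disjoint AP-free sets covering at least n - m
   points, so for n at least cr_ap(t, 1 - 1/s) their density n - m over n is below
   1 - 1/s, i.e. n < s m.  Hence every n > s m beyond that threshold forces an AP. *)
From HB Require Import structures.
From mathcomp Require Import all_boot all_order all_algebra.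
From mathcomp Require Import boolp classical_sets reals constructive_ereal ereal.
From mathcomp Require Import lra.
Set Implicit Arguments. Unset Strict Implicit. Unset Printing Implicit Defensive.
Import Order.TTheory GRing.Theory Num.Theory.
Local Open Scope ring_scope.
Local Open Scope ereal_scope.

Lemma has_ap2_card_gt1 (n : nat) (A : {set 'I_n}) :
  (1 < #|A|)%N -> has_ap 2 (set_of_ord A).
Proof.
move=> /card_gt1P [y1 [y2 [Ay1 Ay2 y12]]].
wlog lt12 : y1 y2 Ay1 Ay2 y12 / (y1 < y2)%N.
  move=> W; case: (ltngtP y1 y2) => h.
  - exact: (W y1 y2).
  - by apply: (W y2 y1) => //; rewrite eq_sym.
  - by move: y12; rewrite (val_inj h) eqxx.
exists y1.+1, (y2 - y1)%N; split => //; split; first by rewrite subn_gt0.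
case=> [|[|k]] // _; first by exists y1; rewrite mul0n addn0.
by exists y2; rewrite mul1n addSn subnKC // ltnW.
Qed.

Lemma sum_card_fibres (n r : nat) (f : 'I_n -> 'I_r) :
  (\sum_(i < r) #|[set y | f y == i]|)%N = n.
Proof.
rewrite -[RHS](card_ord n) -sum1_card (partition_big f predT) //=.
by apply: eq_bigr => i _; rewrite sum1_card cardsE.
Qed.

Lemma disjoint_fibres (n r : nat) (f : 'I_n -> 'I_r) (i j : 'I_r) :
  i != j -> [set y | f y == i] :&: [set y | f y == j] == finset.set0.
Proof.
move=> ij; apply/eqP/setP => y; rewrite !inE.
by apply/negP => /andP [/eqP -> /eqP eq_ij]; rewrite eq_ij eqxx in ij.
Qed.

Lemma cr_prop_le (R : realType) (t : seq nat) (q : R) (n1 n2 : nat) :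
  (n1 <= n2)%N -> cr_prop t q n1 -> cr_prop t q n2.
Proof. by move=> n12 cr n' n2n'; apply: cr; apply: leq_trans n2n'. Qed.

Lemma vdW_le_nat (R : realType) (ks : seq nat) (n0 : nat) :
  (0 < n0)%N -> vdW_prop ks n0 -> vdW R ks <= (n0%:R)%:E.
Proof. by move=> n0_gt0 vdWn0; apply: ge_ereal_inf; exists (n0%:R)%:E => //; exists n0. Qed.

Lemma le_maxe_ereal_inf (R : realType) (x c : \bar R) (A : set (\bar R)) :
  (forall y, A y -> x <= maxe c y) -> x <= maxe c (ereal_inf A).
Proof.
move=> xA; rewrite le_max; have [//|c_lt_x] := leP x c.
apply/orP; right; apply: le_ereal_inf_tmp => y Ay.
by have := xA y Ay; rewrite le_max leNgt c_lt_x.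
Qed.

Lemma le_of_density_lt (R : realType) (s : R) (m n X : nat) :
  (1 < s)%R -> (n <= m + X)%N -> (X%:R / n%:R < 1 - 1 / s)%R ->
  (n%:R <= s * m%:R)%R.
Proof.
move=> s_gt1 n_le_mX; have s_gt0 : (0 < s)%R by apply: lt_trans s_gt1.
have [->|n_gt0] := posnP n; first by rewrite mulr_ge0 // ltW.
have n_le_mX' : (n%:R <= m%:R + X%:R :> R)%R by rewrite -natrD ler_nat.
rewrite ltr_pdivrMr ?ltr0n // mulrBl mul1r => densX.
have : (1 / s * n%:R < m%:R)%R by lra.
by rewrite mul1r mulrC ltr_pdivrMr // => /ltW; rewrite mulrC.
Qed.

Lemma vdW_prop_nseq2_cat (R : realType) (t : seq nat) (m n0 : nat) (s : R) :
  (1 < s)%R -> (s * m%:R < n0%:R)%R -> cr_prop t (1 - 1 / s)%R n0 ->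
  vdW_prop (nseq m 2%N ++ t) n0.
Proof.
move=> s_gt1 sm_lt_n0 cr n n0n.
have := size_cat (nseq m 2%N) t; rewrite size_nseq.
move: (size _) => K eK; subst K => f.
pose class (i : 'I_(m + size t)) := [set y | f y == i].
apply: contrapT => no_ap.
have nth_lshift (i : 'I_m) : nth 0%N (nseq m 2%N ++ t) (lshift (size t) i) = 2%N.
  by rewrite /= nth_cat size_nseq ltn_ord nth_nseq ltn_ord.
have nth_rshift (j : 'I_(size t)) : nth 0%N (nseq m 2%N ++ t) (rshift m j) = nth 0%N t j.
  by rewrite /= nth_cat size_nseq ltnNge leq_addr /= addKn.
have small (i : 'I_m) : (#|class (lshift (size t) i)| <= 1)%N.
  rewrite leqNgt; apply/negP => /has_ap2_card_gt1 ap2.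
  by apply: no_ap; exists (lshift (size t) i); rewrite nth_lshift.
pose S (j : 'I_(size t)) := class (rshift m j).
have disjS (i j : 'I_(size t)) : i != j -> S i :&: S j == finset.set0.
  by move=> ij; apply: disjoint_fibres; apply: contra ij => /eqP/rshift_inj ->.
have apfreeS (j : 'I_(size t)) : ~ has_ap (nth 0%N t j) (set_of_ord (S j)).
  by move=> ap; apply: no_ap; exists (rshift m j); rewrite nth_rshift.
have cover : (n <= m + \sum_(j < size t) #|S j|)%N.
  rewrite -[X in (X <= _)%N](sum_card_fibres f) big_split_ord /= leq_add2r.
  apply: leq_trans (_ : \sum_(i < m) 1 <= m)%N; first by apply: leq_sum => i _; apply: small.
  by rewrite sum1_card card_ord.
have := le_of_density_lt s_gt1 cover (cr n n0n S disjS apfreeS).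
rewrite leNgt => /negP; apply; apply: lt_le_trans sm_lt_n0 _.
by rewrite ler_nat.
Qed.

Theorem corollary1 (R : realType) (t : seq nat) (m : nat) (s : R) :
  param_tuple t -> (0 < size t)%N -> (1 < s)%R ->
  vdW R (nseq m 2%N ++ t) <=
    maxe ((s * m%:R + 1)%R)%:E (cr_ap t (1 - 1 / s)%R).
Proof.
move=> _ _ s_gt1.
have sm_ge0 : (0 <= s * m%:R)%R by rewrite mulr_ge0 // ltW // (lt_trans _ s_gt1).
pose N := (Num.truncn (s * m%:R)).+1.
have sm_lt_N : (s * m%:R < N%:R)%R by apply: truncnS_gt.
have N_le : (N%:R <= s * m%:R + 1)%R by rewrite /N -addn1 natrD lerD2r truncn_le.
apply: le_maxe_ereal_inf => _ [n1 [n1_gt0 crn1] <-].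
have n0_gt0 : (0 < maxn N n1)%N by rewrite leq_max n1_gt0 orbT.
apply: le_trans (vdW_le_nat R n0_gt0 _) _.
  apply: (vdW_prop_nseq2_cat s_gt1); last by apply: cr_prop_le crn1; rewrite leq_maxr.
  by apply: lt_le_trans sm_lt_N _; rewrite ler_nat leq_maxl.
by rewrite le_max; case: leqP => _; rewrite ?lexx ?orbT // lee_fin N_le.
Qed.
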